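(* Fix integers $t\geq 1$ and $r\geq 1$. Then, as $m\to\infty$ (with $m\geq r$), \[ R_t(r,m) \leq \left(1-\frac{1}{2^t}\right)2^m-\frac{\sqrt{2^t-1}}{2^t} (1+\sqrt{2})^{r-1}2^{m/2}+O(m^{r-2}), \] where the constant in the $O(\cdot)$ term may depend on $r$ and $t$.
   Context: For a $t\times n$ matrix $\mathbf{v}$ over $\mathbb{F}_q$ with rows $\overline{v}_1,\dots,\overline{v}_t$, its $t$-weight is $\mathrm{wt}^{(t)}(\mathbf{v})=\left|\bigcup_{i=1}^t \mathrm{supp}(\overline{v}_i)\right|$, and $d^{(t)}(\mathbf{u},\mathbf{v})=\mathrm{wt}^{(t)}(\mathbf{u}-\mathbf{v})$. For a linear code $C\subseteq\mathbb{F}_q^n$ and $t\in\mathbb{N}$, let $C^t$ be the set of $t\times n$ matrices all of whose rows lie in $C$. The $t$-th generalized covering radius $R_t(C)$ is the smallest integer $\rho$ such that for every $\mathbf{v}\in\mathbb{F}_q^{t\times n}$ there is $\mathbf{c}\in C^t$ with $d^{(t)}(\mathbf{v},\mathbf{c})\leq \rho$. Binary Reed–Muller codes $\mathrm{RM}(r,m)\subseteq\mathbb{F}_2^{2^m}$ ($0\le r\le m$) are defined recursively: $\mathrm{RM}(0,m)=\{\overline{0},\overline{1}\}$ (the repetition code of length $2^m$), $\mathrm{RM}(m,m)=\mathbb{F}_2^{2^m}$, and for $1\leq r\leq m-1$, $\mathrm{RM}(r,m)=\{(\overline{u},\overline{u}+\overline{v}) : \overline{u}\in \mathrm{RM}(r,m-1),\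 \overline{v}\in\mathrm{RM}(r-1,m-1)\}$. It is a linear code of length $2^m$ and dimension $\sum_{i=0}^r\binom{m}{i}$. Write $R_t(r,m)=R_t(\mathrm{RM}(r,m))$. *)

From HB Require Import structures.
From mathcomp Require Import all_boot all_order all_algebra.
From mathcomp Require Import reals.
Set Implicit Arguments. Unset Strict Implicit. Unset Printing Implicit Defensive.
Import Order.TTheory GRing.Theory Num.Theory.
Local Open Scope ring_scope.

Fixpoint all_words (n : nat) : seq (seq 'F_2) :=
  match n with
  | 0 => [:: [::]]
  | n'.+1 => [seq a :: w | a <- enum 'F_2, w <- all_words n']
  end.

Definition uuv (u v : seq 'F_2) : seq 'F_2 :=
  u ++ [seq x.1 + x.2 | x <- zip u v].

(* rm_code m r = list of codewords of RM(r,m) (length 2^m), by the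
   recursive definition of the paper:
   RM(0,m) = {0,1}, RM(m,m) = F_2^(2^m) (also used for r >= m),
   RM(r,m) = {(u,u+v) : u in RM(r,m-1), v in RM(r-1,m-1)} for 1<=r<=m-1. *)
Fixpoint rm_code (m r : nat) : seq (seq 'F_2) :=
  match m with
  | 0 => [:: [:: 0]; [:: 1]]
  | m'.+1 =>
    match r with
    | 0 => [:: nseq (2 ^ m'.+1)%N 0; nseq (2 ^ m'.+1)%N 1]
    | r'.+1 =>
      if (m' <= r')%N then all_words (2 ^ m'.+1)
      else [seq uuv u v | u <- rm_code m' r, v <- rm_code m' r']
    end
  end.

Definition RM (r m : nat) : {set 'rV['F_2]_(2 ^ m)} :=
  [set w : 'rV['F_2]_(2 ^ m) | [seq w ord0 j | j <- enum 'I_(2 ^ m)] \in rm_code m r].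

Definition wt_t (t n : nat) (v : 'M['F_2]_(t, n)) : nat :=
  #|[set j : 'I_n | [exists i : 'I_t, v i j != 0]]|.

Definition d_t (t n : nat) (u v : 'M['F_2]_(t, n)) : nat := wt_t (u - v).

(* The disjunct (n <= rho)
   only guarantees existence of a minimum; it does not change the minimum
   for nonempty C (e.g. linear codes), since then rho = n already covers. *)
Definition cov_pred (t n : nat) (C : {set 'rV['F_2]_n}) : pred nat :=
  fun rho => (n <= rho)%N ||
    [forall v : 'M['F_2]_(t, n), [exists c : 'M['F_2]_(t, n),
        [forall i : 'I_t, row i c \in C] && (d_t v c <= rho)%N]].

Lemma cov_pred_ex (t n : nat) (C : {set 'rV['F_2]_n}) :
  exists rho, cov_pred t C rho.
Proof. by exists n; rewrite /cov_pred leqnn. Qed.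

Definition gen_cov_radius (t n : nat) (C : {set 'rV['F_2]_n}) : nat :=
  ex_minn (cov_pred_ex t C).

Definition R_t_RM (t r m : nat) : nat := gen_cov_radius t (RM r m).

(* The (u | u + v) construction gives R_t(r+1, m+1) <= R_t(r+1, m) + R_t(r, m),
   and the main term g(r, m) = (1 - 2^-t) 2^m - c (1 + sqrt 2)^(r-1) 2^(m/2)
   satisfies this recursion with equality; hence the constants lost at the
   base cases m = r accumulate along a column of Pascal's triangle, giving an
   error B C(m, r-2) = O(m^(r-2)).
   For r = 1, Parseval's identity for RM(1, m) shows that for any word and any
   set S of positions some affine word agrees with the word on at least
   (|S| + sqrt |S|)/2 positions of S.  Choosing the t rows of the covering
   matrix one at a time, each on the positions where the previous ones all
   agree, the number of positions of full agreement after k rows is at least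
   h_k = (2^m + sqrt (2^k - 1) 2^(m/2)) / 2^k, because h_0 = 2^m and
   h_(k+1) <= (h_k + sqrt h_k)/2.  The t-distance is then at most
   2^m - h_t = g(1, m). *)

From HB Require Import structures.
From mathcomp Require Import all_boot all_order all_algebra.
From mathcomp Require Import reals.
From mathcomp Require Import lra ring.
Import Order.TTheory GRing.Theory Num.Theory.
Set Implicit Arguments. Unset Strict Implicit. Unset Printing Implicit Defensive.

Local Open Scope ring_scope.

Lemma F2_cases (x : 'F_2) : x = 0 \/ x = 1.
Proof. by case: x => [[|[|//]]] ?; [left|right]; apply/val_inj. Qed.

Lemma F2_addxx (x : 'F_2) : x + x = 0.
Proof. by case: (F2_cases x) => ->; apply/val_inj. Qed.

Lemma F2_neq_addl (x u w : 'F_2) : (x != u + w) = (x + u != w).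
Proof.
by case: (F2_cases x) => ->; case: (F2_cases u) => ->; case: (F2_cases w) => ->.
Qed.

Lemma mem_all_words n s : (s \in all_words n) = (size s == n).
Proof.
elim: n s => [|n IHn] [|a s] //=; rewrite ?inE //.
  by apply/allpairsP => -[[b w] [_ _ //]].
apply/allpairsP/idP => [[[b w] [_ /= + [_ ->]]]|]; first by rewrite IHn.
by move=> size_s; exists (a, s); rewrite mem_enum IHn.
Qed.

Lemma size_uuv u v : size u = size v -> size (uuv u v) = (size u + size u)%N.
Proof. by move=> eq_uv; rewrite /uuv size_cat size_map size1_zip ?eq_uv. Qed.

Lemma iota_double n : iota 0 (n + n)%N = iota 0 n ++ map (addn n) (iota 0 n).
Proof. by rewrite iotaD -iotaDl addn0 add0n. Qed.

Lemma size_rm_code m r s : s \in rm_code m r -> size s = (2 ^ m)%N.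
Proof.
elim: m r s => [|m IHm] r s /=; first by rewrite !inE => /orP[] /eqP ->.
case: r => [|r]; first by rewrite !inE => /orP[] /eqP ->; rewrite size_nseq.
case: ifP => _; first by rewrite mem_all_words => /eqP.
case/allpairsP => -[u v] [/= /IHm size_u /IHm size_v ->].
by rewrite size_uuv ?size_u ?size_v // expnS mul2n addnn.
Qed.

Lemma mem_rm_code_full m r s : (0 < m <= r)%N ->
  (s \in rm_code m r) = (size s == 2 ^ m)%N.
Proof.
by case: m r => [|m] [|r] //= le_mr; rewrite ltnS in le_mr; rewrite le_mr mem_all_words.
Qed.

Lemma rm_codeS m r : (r < m)%N ->
  rm_code m.+1 r.+1 = [seq uuv u v | u <- rm_code m r.+1, v <- rm_code m r].
Proof. by move=> lt_rm; rewrite [LHS]/= leqNgt lt_rm. Qed.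

Definition tdist t n (a c : 'I_t -> seq 'F_2) : nat :=
  count (fun j => [exists i, nth 0 (a i) j != nth 0 (c i) j]) (iota 0 n).

Definition covers (R : numDomainType) (C : seq (seq 'F_2)) n t (x : R) :=
  forall a : 'I_t -> seq 'F_2, (forall i, size (a i) = n) ->
  exists2 c : 'I_t -> seq 'F_2, (forall i, c i \in C) & (tdist n a c)%:R <= x.

Section Covers.

Variables (R : numDomainType) (t : nat).

Lemma covers_le C n (x y : R) : x <= y -> covers C n t x -> covers C n t y.
Proof.
move=> le_xy covC a size_a; have [c Cc le_x] := covC a size_a.
by exists c => //; apply: le_trans le_xy.
Qed.

Lemma covers_sub C C' n (x : R) :
  {subset C <= C'} -> covers C n t x -> covers C' n t x.
Proof.
move=> sCC' covC a size_a; have [c Cc le_x] := covC a size_a.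
by exists c => // i; apply: sCC'.
Qed.

Lemma covers_all_words C n :
  (forall s, size s = n -> s \in C) -> covers C n t (0 : R).
Proof.
move=> allC a size_a; exists a => [i|]; first exact: allC.
rewrite /tdist (@eq_count _ _ pred0) ?count_pred0 // => j.
by apply/existsP => -[i]; rewrite eqxx.
Qed.

(* Cover the left halves of [a] by [u], then the right halves plus [u] by [v]:
   the t-distance from [a] to (u | u + v) is the sum of the two distances. *)
Lemma covers_uuv C1 C2 n (x y : R) :
  {in C1, forall u, size u = n} -> {in C2, forall v, size v = n} ->
  covers C1 n t x -> covers C2 n t y ->
  covers [seq uuv u v | u <- C1, v <- C2] (n + n) t (x + y).
Proof.
move=> size_C1 size_C2 cov1 cov2 a size_a.
have size_l i : size (take n (a i)) = n by rewrite size_takel // size_a leq_addr.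
have [u C1u le_x] := cov1 _ size_l.
have size_u i : size (u i) = n by apply: size_C1.
pose b i := [seq p.1 + p.2 | p <- zip (drop n (a i)) (u i)].
have size_b i : size (b i) = n.
  by rewrite size_map size1_zip size_drop size_a addnK ?size_u.
have [v C2v le_y] := cov2 _ size_b.
have size_v i : size (v i) = n by apply: size_C2.
exists (fun i => uuv (u i) (v i)) => [i|]; first exact: allpairs_f.
apply: le_trans (lerD le_x le_y); rewrite -natrD ler_nat.
rewrite /tdist iota_double count_cat count_map; apply: eq_leq; congr (_ + _)%N.
  apply: eq_in_count => j; rewrite mem_iota add0n => /andP[_ lt_jn].
  apply: eq_existsb => i.
  by rewrite nth_take // /uuv nth_cat size_u lt_jn.
apply: eq_in_count => j; rewrite mem_iota add0n => /andP[_ lt_jn] /=.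
apply: eq_existsb => i.
rewrite /uuv nth_cat size_u ltnNge leq_addr /= addKn.
rewrite (nth_map (0, 0)) ?size1_zip ?size_u ?size_v //.
rewrite (nth_map (0, 0)) ?size1_zip ?size_drop ?size_a ?addnK ?size_u //.
by rewrite !nth_zip ?size_drop ?size_a ?addnK ?size_u ?size_v //= nth_drop F2_neq_addl.
Qed.

End Covers.

Lemma gen_cov_radius_le (R : realDomainType) t n (C : {set 'rV['F_2]_n}) (x : R) :
  (forall v : 'M_(t, n),
     exists2 c : 'M_(t, n), (forall i, row i c \in C) & (d_t v c)%:R <= x) ->
  (gen_cov_radius t C)%:R <= x.
Proof.
move=> cov; rewrite /gen_cov_radius; case: ex_minnP => k _ min_k.
rewrite leNgt; apply/negP => lt_xk.
have [c0 _ le0] := cov 0.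
have k_gt0 : (0 < k)%N.
  by rewrite -(ltr_nat R) (le_lt_trans _ lt_xk) // (le_trans _ le0).
suff /min_k : cov_pred t C k.-1 by rewrite leqNgt ltn_predL k_gt0.
apply/orP; right; apply/forallP => v; have [c Cc le_x] := cov v.
apply/existsP; exists c; rewrite (introT forallP Cc) /=.
by rewrite -ltnS prednK // -(ltr_nat R) (le_lt_trans le_x).
Qed.

(* [RM r m] is [word_set (rm_code m r)] by definition. *)
Definition word_set n (C : seq (seq 'F_2)) : {set 'rV['F_2]_n} :=
  [set w : 'rV_n | [seq w ord0 j | j <- enum 'I_n] \in C].

Lemma gen_cov_radius_word_set_le (R : realDomainType) t n C (x : R) :
  {in C, forall s, size s = n} -> covers C n t x ->
  (gen_cov_radius t (word_set n C))%:R <= x.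
Proof.
move=> size_C covC; apply: gen_cov_radius_le => v.
pose a i := [seq v i j | j <- enum 'I_n].
have size_a i : size (a i) = n by rewrite size_map size_enum_ord.
have [c Cc le_x] := covC _ size_a.
exists (\matrix_(i, j) nth 0 (c i) j) => [i|].
  rewrite inE (eq_map (g := fun j : 'I_n => nth 0 (c i) j)) => [|j]; last first.
    by rewrite !mxE.
  rewrite (map_comp (nth 0 (c i)) val) val_enum_ord -(size_C _ (Cc i)).
  by rewrite [map _ _](mkseq_nth 0 (c i)).
apply: le_trans le_x; rewrite ler_nat eq_leq //.
rewrite /d_t /wt_t /tdist cardE /enum_mem -enumT -val_enum_ord count_map size_filter.
apply: eq_count => j /=; rewrite inE; apply: eq_existsb => i.
by rewrite !mxE subr_eq0 /a (nth_map j) ?size_enum_ord // nth_ord_enum.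
Qed.

(** * Parseval's identity for first-order Reed-Muller codes *)

Definition sgnF2 (R : pzRingType) (b : 'F_2) : R := if b == 0 then 1 else -1.

Section SignF2.

Variable R : pzRingType.

Lemma sgnF2D x y : sgnF2 R (x + y) = sgnF2 R x * sgnF2 R y.
Proof.
rewrite /sgnF2; case: (F2_cases x) => ->; case: (F2_cases y) => ->;
  by rewrite ?addr0 ?add0r ?F2_addxx ?eqxx ?oner_eq0 ?mulrNN ?mulr1 ?mul1r.
Qed.

Lemma sgnF2_mul x y : sgnF2 R x * sgnF2 R y = 2%:R * (x == y)%:R - 1.
Proof.
rewrite /sgnF2; case: (F2_cases x) => ->; case: (F2_cases y) => ->;
  by rewrite /= ?mulrNN ?mulr1 ?mul1r ?mulrN1 ?mulr0 ?sub0r // mulr2n addrK.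
Qed.

End SignF2.

(* RM(1, m), listed by the (u | u + v) recursion all the way down to length 1
   (without the special case r >= m of [rm_code]), so that Parseval's identity
   can be proved by induction along it. *)
Fixpoint rm1 (m : nat) : seq (seq 'F_2) :=
  match m with
  | 0 => [:: [:: 0]; [:: 1]]
  | m'.+1 => [seq uuv u v | u <- rm1 m', v <- [:: nseq (2 ^ m') 0; nseq (2 ^ m') 1]]
  end.

Lemma rm1S m :
  rm1 m.+1 = [seq uuv u v | u <- rm1 m, v <- [:: nseq (2 ^ m) 0; nseq (2 ^ m) 1]].
Proof. by []. Qed.

Lemma size_rm1 m s : s \in rm1 m -> size s = (2 ^ m)%N.
Proof.
elim: m s => [|m IHm] s; first by rewrite !inE => /orP[] /eqP ->.
rewrite rm1S; case/allpairsP => -[u v] [/= /IHm size_u v01 ->].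
have size_v : size v = (2 ^ m)%N.
  by move: v01; rewrite !inE => /orP[] /eqP ->; rewrite size_nseq.
by rewrite size_uuv ?size_u ?size_v // expnS mul2n addnn.
Qed.

Lemma size_rm1_seq m : size (rm1 m) = (2 ^ m.+1)%N.
Proof.
by elim: m => // m IHm; rewrite rm1S size_allpairs IHm /= [in RHS]expnS mulnC.
Qed.

Lemma rm1_sub_rm_code m : (0 < m)%N -> {subset rm1 m <= rm_code m 1}.
Proof.
elim: m => [//|[|m] IHm] _ s; rewrite rm1S => /allpairsP[[u v] [rm1u v01 ->]].
  rewrite mem_rm_code_full // size_uuv ?(size_rm1 rm1u) //.
  by move: v01; rewrite !inE => /orP[] /eqP ->.
by rewrite rm_codeS //; apply: allpairs_f => //; apply: IHm.
Qed.

Lemma rm1_compl m s : s \in rm1 m -> [seq x + 1 | x <- s] \in rm1 m.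
Proof.
elim: m s => [|m IHm] s.
  by rewrite !inE => /orP[] /eqP -> /=; rewrite ?add0r ?F2_addxx.
rewrite rm1S; case/allpairsP => -[u v] [/= rm1u v01 ->].
have -> : [seq x + 1 | x <- uuv u v] = uuv [seq x + 1 | x <- u] v.
  rewrite /uuv map_cat; congr (_ ++ _).
  by elim: u v {rm1u v01} => [|x u IHu] [|y v] //=; rewrite IHu addrAC.
exact: allpairs_f (IHm _ rm1u) v01.
Qed.

Section Correlation.

Variable R : comPzRingType.

Definition corr (f : nat -> R) n (a : seq 'F_2) : R :=
  \sum_(j <- iota 0 n) f j * sgnF2 R (nth 0 a j).

Lemma corr_compl f n a : size a = n -> corr f n [seq x + 1 | x <- a] = - corr f n a.
Proof.
move=> size_a; rewrite /corr -sumrN; apply: eq_big_seq => j.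
rewrite mem_iota add0n => /andP[_ lt_jn].
by rewrite (nth_map 0) ?size_a // sgnF2D /sgnF2 /= mulrN1 mulrN.
Qed.

Lemma corr_uuv_const f n u e : size u = n ->
  corr f (n + n) (uuv u (nseq n e)) = corr f n u + sgnF2 R e * corr (f \o addn n) n u.
Proof.
move=> size_u; rewrite /corr iota_double big_cat big_map; congr (_ + _).
  apply: eq_big_seq => j; rewrite mem_iota add0n => /andP[_ lt_jn].
  by rewrite /uuv nth_cat size_u lt_jn.
rewrite mulr_sumr.
apply: eq_big_seq => j; rewrite mem_iota add0n => /andP[_ lt_jn].
rewrite /uuv nth_cat size_u ltnNge leq_addr /= addKn.
rewrite (nth_map (0, 0)) ?size1_zip ?size_nseq ?size_u //.
by rewrite nth_zip ?size_nseq //= nth_nseq lt_jn sgnF2D mulrA mulrC.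
Qed.

Lemma parseval_rm1 m (f : nat -> R) :
  \sum_(a <- rm1 m) corr f (2 ^ m) a ^+ 2 =
  (2 ^ m.+1)%:R * \sum_(j <- iota 0 (2 ^ m)) f j ^+ 2.
Proof.
elim: m f => [|m IHm] f.
  rewrite /= !big_cons !big_nil /corr /= !big_cons !big_nil /sgnF2 /=.
  by rewrite !addr0 mulr1 mulrN1 sqrrN mulr2n mulrDl mul1r.
rewrite rm1S big_allpairs_dep /=.
have -> : (2 ^ m.+1 = 2 ^ m + 2 ^ m)%N by rewrite expnS mul2n addnn.
have sqr_pm (A B : R) : (A + B) ^+ 2 + (A - B) ^+ 2 = 2%:R * (A ^+ 2 + B ^+ 2).
  by rewrite mulr2n; ring.
under eq_big_seq => u rm1u do rewrite !big_cons big_nil !corr_uuv_const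
  ?(size_rm1 rm1u) // /sgnF2 /= mul1r mulN1r addr0 sqr_pm.
rewrite -mulr_sumr big_split /= !IHm iota_double big_cat big_map.
by rewrite -mulrDr mulrA -natrM -expnS.
Qed.

End Correlation.

Lemma natr_count (R : pzSemiRingType) (T : Type) (P : pred T) (s : seq T) :
  (count P s)%:R = \sum_(x <- s) (P x)%:R :> R.
Proof. by elim: s => [|x s IHs]; rewrite ?big_nil ?big_cons //= natrD IHs. Qed.

Lemma exists_ge_average (R : realDomainType) (T : eqType) (s : seq T) (h : T -> R) c :
  s != [::] -> (size s)%:R * c <= \sum_(a <- s) h a -> exists2 a, a \in s & c <= h a.
Proof.
move=> s_neq0 le_sum.
have [/hasP[a sa le_c]|/hasPn lt_h] := boolP (has (fun a => c <= h a) s).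
  by exists a.
move: le_sum; rewrite leNgt => /negP[].
rewrite mulr_natl -iter_addr_0 -count_predT -big_const_seq !big_seq ltr_sum //.
  by case: s s_neq0 {lt_h} => // a s _; apply/hasP; exists a; rewrite ?mem_head.
by move=> a sa; rewrite ltNge lt_h.
Qed.

Lemma exists_rm1_corr_ge (R : rcfType) m (f : nat -> R) :
  exists2 b, b \in rm1 m &
    Num.sqrt (\sum_(j <- iota 0 (2 ^ m)) f j ^+ 2) <= corr f (2 ^ m) b.
Proof.
set E := \sum_(j <- _) _.
have [b rm1b le_E] : exists2 b, b \in rm1 m & E <= corr f (2 ^ m) b ^+ 2.
  apply: exists_ge_average; first by rewrite -size_eq0 size_rm1_seq expn_eq0.
  by rewrite parseval_rm1 size_rm1_seq.
have le_abs : Num.sqrt E <= `|corr f (2 ^ m) b| by rewrite -sqrtr_sqr ler_wsqrtr.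
have [ge0|lt0] := leP 0 (corr f (2 ^ m) b).
  by exists b; rewrite // -(ger0_norm ge0).
exists [seq x + 1 | x <- b]; first exact: rm1_compl.
by rewrite corr_compl ?(size_rm1 rm1b) // -(ltr0_norm lt0).
Qed.

(* Parseval gives an affine word whose correlation with the +-1 pattern of [g]
   restricted to [S] is at least sqrt |S|; correlation c means agreement on
   (|S| + c)/2 positions of [S]. *)
Lemma exists_rm1_agree (R : rcfType) m (g : seq 'F_2) (S : pred nat) :
  exists2 b, b \in rm1 m &
  ((count S (iota 0 (2 ^ m)))%:R + Num.sqrt (count S (iota 0 (2 ^ m)))%:R) / 2
    <= (count (fun j => S j && (nth 0 g j == nth 0 b j)) (iota 0 (2 ^ m)))%:R :> R.
Proof.
pose f j : R := if S j then sgnF2 R (nth 0 g j) else 0.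
have [b rm1b le_corr] := exists_rm1_corr_ge m f.
exists b => //; move: le_corr.
set nS : R := (count S _)%:R; set A : R := (count _ _)%:R.
have -> : \sum_(j <- iota 0 (2 ^ m)) f j ^+ 2 = nS.
  rewrite /nS natr_count; apply: eq_bigr => j _; rewrite /f.
  case: (S j) => /=; last by rewrite expr0n.
  by rewrite expr2 sgnF2_mul eqxx mulr1 mulr2n addrK.

have -> : corr f (2 ^ m) b = 2%:R * A - nS.
  rewrite /corr /A /nS !natr_count mulr_sumr -sumrB; apply: eq_bigr => j _.
  by rewrite /f; case: (S j); rewrite ?sgnF2_mul /= ?mul0r ?mulr0 ?subr0.
by move=> ?; lra.
Qed.

(** * The greedy covering by first-order codewords *)

Lemma sqrtrD_le (R : rcfType) (a b : R) : 0 <= a -> 0 <= b ->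
  Num.sqrt (a + b) <= Num.sqrt a + Num.sqrt b.
Proof.
move=> a_ge0 b_ge0; have apb_ge0 := addr_ge0 a_ge0 b_ge0.
have ab_ge0 := mulr_ge0 (sqrtr_ge0 a) (sqrtr_ge0 b).
rewrite -ler_sqr ?nnegrE ?addr_ge0 ?sqrtr_ge0 // sqrrD !sqr_sqrtr //.
by rewrite mulr2n; lra.
Qed.

Definition agree_bound (R : rcfType) m k : R :=
  (2 ^+ m + Num.sqrt (2 ^+ k - 1) * Num.sqrt 2 ^+ m) / 2 ^+ k.

Lemma sqr_sqrt2X (R : rcfType) k : Num.sqrt 2 ^+ k ^+ 2 = 2 ^+ k :> R.
Proof. by rewrite -exprM mulnC exprM sqr_sqrtr ?ler0n. Qed.

Lemma agree_boundS_le (R : rcfType) m k :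
  agree_bound R m k.+1 <= (agree_bound R m k + Num.sqrt (agree_bound R m k)) / 2.
Proof.
rewrite /agree_bound exprS; set P : R := 2 ^+ k; set q : R := Num.sqrt 2 ^+ m.
set u : R := Num.sqrt (P - 1); set w : R := Num.sqrt 2 ^+ k; set h := (_ + _) / P.
have P_gt0 : 0 < P by rewrite exprn_gt0.
have P_ge0 := ltW P_gt0.
have q_ge0 : 0 <= q by rewrite exprn_ge0 ?sqrtr_ge0.
have w_ge0 : 0 <= w by rewrite exprn_ge0 ?sqrtr_ge0.
have u_ge0 : 0 <= u by apply: sqrtr_ge0.
have P_ge1 : 1 <= P by rewrite exprn_ege1 ?ler1n.
have Ph : P * h = 2 ^+ m + u * q by rewrite /h mulrC divfK ?gt_eqF.
have h_ge0 : 0 <= h.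
  by apply: divr_ge0 P_ge0; apply: addr_ge0; [apply: exprn_ge0 | apply: mulr_ge0].
have sqrt2P : Num.sqrt (2 * P - 1) <= u + w.
  rewrite (_ : 2 * P - 1 = (P - 1) + P); last by ring.
  have sqrtP : Num.sqrt P = w by rewrite /P -(sqr_sqrt2X R k) sqrtr_sqr ger0_norm.
  by rewrite -sqrtP; apply: sqrtrD_le; rewrite ?subr_ge0.
have wq_le : w * q <= P * Num.sqrt h.
  rewrite -ler_sqr ?nnegrE ?mulr_ge0 ?sqrtr_ge0 // !exprMn sqr_sqrtr //.
  rewrite /w /q !sqr_sqrt2X -/P.
  by rewrite expr2 -mulrA Ph ler_pM2l // lerDl; apply: mulr_ge0.
rewrite ler_pdivrMr ?mulr_gt0 //.
have := ler_wpM2r q_ge0 sqrt2P.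
lra.
Qed.

Section GreedyRows.

Variables (R : rcfType) (t m : nat) (g : 'I_t -> seq 'F_2).

Definition rows_agree k (a : 'I_t -> seq 'F_2) j :=
  [forall i : 'I_t, (i < k)%N ==> (nth 0 (g i) j == nth 0 (a i) j)].

Lemma rows_agreeS k (i0 : 'I_t) a b j : i0 = k :> nat ->
  rows_agree k.+1 (fun i => if i == i0 then b else a i) j =
  rows_agree k a j && (nth 0 (g i0) j == nth 0 b j).
Proof.
move=> i0k; have neq_i0 (i : 'I_t) : (i < k)%N -> (i == i0) = false.
  by move=> lt_ik; apply/eqP => eq_i; move: lt_ik; rewrite eq_i i0k ltnn.
apply/forallP/andP => [agree | [/forallP agree agree0] i].
  split; last by have := agree i0; rewrite /= eqxx i0k ltnSn.
  apply/forallP => i; apply/implyP => lt_ik.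
  by have := implyP (agree i) (ltnW lt_ik); rewrite neq_i0.
apply/implyP; rewrite ltnS leq_eqVlt => /orP[/eqP ik|lt_ik].
  have -> : i = i0 by apply: ord_inj; rewrite ik i0k.
  by rewrite /= eqxx.
by rewrite /= neq_i0 //; apply: (implyP (agree i)).
Qed.

(* Choose the rows one at a time, each maximising the agreement on the
   positions where all previous rows already agree. *)
Lemma exists_rm1_rows_agree k : (k <= t)%N ->
  exists2 a : 'I_t -> seq 'F_2, (forall i, a i \in rm1 m) &
    agree_bound R m k <= (count (rows_agree k a) (iota 0 (2 ^ m)))%:R.
Proof.
elim: k => [|k IHk] le_kt.
  have rm1_0 : nth [::] (rm1 m) 0 \in rm1 m by rewrite mem_nth ?size_rm1_seq ?expn_gt0.
  exists (fun _ => nth [::] (rm1 m) 0) => //.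
  rewrite (@eq_count _ _ predT) ?count_predT ?size_iota => [|j]; last exact/forallP.
  by rewrite /agree_bound expr0 subrr sqrtr0 mul0r addr0 divr1 natrX.
have [a rm1a le_a] := IHk (ltnW le_kt).
have [b rm1b le_b] := exists_rm1_agree R m (g (Ordinal le_kt)) (rows_agree k a).
exists (fun i => if i == Ordinal le_kt then b else a i) => [i|]; first by case: ifP.
rewrite (eq_count (fun j => @rows_agreeS k (Ordinal le_kt) a b j erefl)).
apply: le_trans le_b; apply: le_trans (agree_boundS_le R m k) _.
by rewrite ler_pM2r ?invr_gt0 //; apply: lerD => //; apply: ler_wsqrtr.
Qed.

End GreedyRows.

Lemma covers_rm1 (R : rcfType) t m :
  covers (rm1 m) (2 ^ m) t (2 ^+ m - agree_bound R m t).
Proof.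
move=> g size_g; have [a rm1a le_a] := exists_rm1_rows_agree R m g (leqnn t).
exists a => //; set c := count _ _ in le_a.
have -> : tdist (2 ^ m) g a = (2 ^ m - c)%N.
  rewrite -[in RHS](size_iota 0 (2 ^ m)) -(count_predC (rows_agree g t a)) addKn.
  apply: eq_count => j /=; rewrite negb_forall; apply: eq_existsb => i.
  by rewrite ltn_ord.
have le_c : (c <= 2 ^ m)%N by rewrite -[X in (_ <= X)%N](size_iota 0) count_size.
by rewrite natrB // natrX lerB.
Qed.

(** * Induction on the order *)

Lemma covers_rm_codeS (R : numDomainType) t r m (x y : R) : (r < m)%N ->
  covers (rm_code m r.+1) (2 ^ m) t x -> covers (rm_code m r) (2 ^ m) t y ->
  covers (rm_code m.+1 r.+1) (2 ^ m.+1) t (x + y).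
Proof.
move=> lt_rm; rewrite rm_codeS // expnS mul2n -addnn.
by apply: covers_uuv => s; apply: size_rm_code.
Qed.

Lemma covers_rm_code_ind (R : numDomainType) t r (x y : nat -> R) :
  0 <= x r.+1 -> (forall m, (r < m)%N -> covers (rm_code m r) (2 ^ m) t (y m)) ->
  (forall m, (r < m)%N -> x m + y m <= x m.+1) ->
  forall m, (r < m)%N -> covers (rm_code m r.+1) (2 ^ m) t (x m).
Proof.
move=> x_ge0 cov_y le_xy; elim=> // m IHm.
rewrite ltnS leq_eqVlt => /orP[/eqP <-|lt_rm].
  apply: covers_le x_ge0 (covers_all_words _ _) => s /eqP.
  by rewrite mem_rm_code_full ?ltnS ?leqnn.
exact: covers_le (le_xy m lt_rm) (covers_rm_codeS lt_rm (IHm lt_rm) (cov_y m lt_rm)).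
Qed.

Definition rm_main_term (R : rcfType) t r m : R :=
  (1 - 1 / 2 ^+ t) * 2 ^+ m
  - Num.sqrt (2 ^+ t - 1) / 2 ^+ t * (1 + Num.sqrt 2) ^+ r.-1 * Num.sqrt 2 ^+ m.

Lemma rm_main_term1 (R : rcfType) t m :
  rm_main_term R t 1 m = 2 ^+ m - agree_bound R m t.
Proof.
have t_neq0 : 2 ^+ t != 0 :> R by rewrite expf_neq0 ?pnatr_eq0.
by rewrite /rm_main_term /agree_bound expr0 mulr1; field.
Qed.

(* Since (1 + sqrt 2) sqrt 2 = (1 + sqrt 2) + 1, the main term satisfies the
   recursion of [covers_rm_codeS] with equality. *)
Lemma rm_main_termS (R : rcfType) t r m : (0 < r)%N ->
  rm_main_term R t r.+1 m.+1 = rm_main_term R t r.+1 m + rm_main_term R t r m.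
Proof.
case: r => // r _.
have sqrt2_sqr : Num.sqrt 2 ^+ 2 = 2 :> R by rewrite sqr_sqrtr ?ler0n.
rewrite /rm_main_term /= !exprS; ring: sqrt2_sqr.
Qed.

Definition rm_error r m : nat := if (1 < r)%N then 'C(m, r - 2) else 0.

Lemma rm_error_pascal r m : (0 < r)%N ->
  (rm_error r.+1 m + rm_error r m <= rm_error r.+1 m.+1)%N.
Proof.
rewrite /rm_error; case: r => [|[|r]] //= _; first by rewrite !bin0.
by rewrite !subn2 /= binS.
Qed.

Lemma rm_error_gt0 r : (0 < rm_error r.+2 r.+2)%N.
Proof. by rewrite /rm_error /= subn2 bin_gt0 leqW. Qed.

Lemma bin_leq_expn n k : ('C(n, k) <= n ^ k)%N.
Proof.
rewrite (leq_trans (leq_pmulr _ (fact_gt0 k))) // bin_ffact ffact_prod.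
have -> : (n ^ k = \prod_(i < k) n)%N by rewrite prod_nat_const card_ord.
by apply: leq_prod => i _; apply: leq_subr.
Qed.

Lemma rm_error_le (R : realFieldType) r m :
  (rm_error r m)%:R <= (m%:R : R) ^ (r%:Z - 2).
Proof.
rewrite /rm_error; case: ifP => [lt1r|_]; last by rewrite exprz_ge0 ?ler0n.
have -> : r%:Z - 2 = (r - 2)%N :> int by rewrite subzn.
by rewrite -exprnP -natrX ler_nat bin_leq_expn.
Qed.

Lemma covers_rm_code (R : rcfType) t r : (0 < r)%N ->
  exists2 B : R, 0 <= B & forall m, (r <= m)%N ->
    covers (rm_code m r) (2 ^ m) t (rm_main_term R t r m + B * (rm_error r m)%:R).
Proof.
elim: r => // r IHr _; have [->|r_gt0] := posnP r.
  exists 0 => // m m_gt0; rewrite mul0r addr0 rm_main_term1.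
  apply: covers_sub (rm1_sub_rm_code m_gt0) _; exact: covers_rm1.
have [B B_ge0 covB] := IHr r_gt0.
set B' := B + `|rm_main_term R t r.+1 r.+1|.
have le_BB' : B <= B' by rewrite lerDl.
have B'_ge0 : 0 <= B' by rewrite addr_ge0.
exists B' => //.
apply: (@covers_rm_code_ind _ _ _
  (fun m => rm_main_term R t r.+1 m + B' * (rm_error r.+1 m)%:R)
  (fun m => rm_main_term R t r m + B * (rm_error r m)%:R)) => [|m /ltnW|m lt_rm].
- have le_e : 1 <= (rm_error r.+1 r.+1)%:R :> R.
    rewrite ler1n; case: r r_gt0 {IHr covB B' le_BB' B'_ge0} => // r _.
    exact: rm_error_gt0.
  have := ler_peMr B'_ge0 le_e; have := ler_norm (- rm_main_term R t r.+1 r.+1).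
  by rewrite normrN /B'; lra.
- exact: covB.
- have le_e : (rm_error r.+1 m + rm_error r m)%:R <= (rm_error r.+1 m.+1)%:R :> R.
    by rewrite ler_nat rm_error_pascal.
  have := ler_wpM2l B'_ge0 le_e; have := ler_wpM2r (ler0n R (rm_error r m)) le_BB'.
  by rewrite rm_main_termS // natrD mulrDr; lra.
Qed.

Unset Implicit Arguments.

Theorem theorem11 (R : realType) (t r : nat) :
  (1 <= t)%N -> (1 <= r)%N ->
  exists (K : R) (M : nat), forall m : nat, (M <= m)%N -> (r <= m)%N ->
    ((R_t_RM t r m)%:R : R) <=
      (1 - 1 / (2 ^+ t)) * (2 ^+ m)
      - Num.sqrt (2 ^+ t - 1) / (2 ^+ t) * (1 + Num.sqrt 2) ^+ (r.-1)
        * Num.sqrt 2 ^+ m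
      + K * (m%:R) ^ (r%:Z - 2).
Proof.
(* The argument does not use [1 <= t]. *)
move=> _ r_gt0; have [B B_ge0 covB] := covers_rm_code R t r_gt0.
exists B, 0%N => m _ le_rm.
apply: le_trans (gen_cov_radius_word_set_le (@size_rm_code m r) (covB m le_rm)) _.
by rewrite lerD2l ler_wpM2l // rm_error_le.
Qed.
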